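(* Let $k\le l$ be positive integers with $\gcd(k,l)=1$, let $n\ge 1$ and $m\ge 0$ be integers, and write $m=qn+r$ with integers $q\ge 0$ and $0\le r<n$. Let $x,y$ be integers satisfying $x\ge rk$, $y\ge rl$ and $qxy+r(xl+yk)\ge klnr$, chosen so that $x+y$ is the smallest possible among all such pairs. Then $$L^{k,l}(m,n)\ge \min\bigl(nk(q+1),\ nkq+x+y\bigr).$$
   Context: $\mathcal D^{k,l}(m,n)$ denotes the set of all $nk\times nl$ matrices with nonnegative integer entries all of whose row sums equal $ml$ and all of whose column sums equal $mk$. For an $s\times t$ matrix $A=(a_{ij})$ with $s\le t$, a transversal of $A$ is a set of entries $T=\{a_{1i_1},\dots,a_{si_s}\}$ with $i_1,\dots,i_s\in\{1,\dots,t\}$ pairwise distinct, and $|T|=a_{1i_1}+\cdots+a_{si_s}$; if $s>t$, the transversals of $A$ are those of its transpose. The tropical determinant is ${\rm tdet}(A)=\max_T|T|$ over all transversals $T$ of $A$, and $L^{k,l}(m,n)=\min_{A\in\mathcal D^{k,l}(m,n)}{\rm tdet}(A)$. *)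

From mathcomp Require Import all_boot all_algebra.
Set Implicit Arguments. Unset Strict Implicit. Unset Printing Implicit Defensive.

(* For s <= t a transversal
   picks one entry in each row, in pairwise distinct columns (an injective
   map rows -> columns); for s > t we use the transpose (an injective map
   columns -> rows). *)
Definition tdet (s t : nat) (A : 'M[nat]_(s, t)) : nat :=
  if s <= t then
    \max_(f : {ffun 'I_s -> 'I_t} | injectiveb f) \sum_(i < s) A i (f i)
  else
    \max_(f : {ffun 'I_t -> 'I_s} | injectiveb f) \sum_(j < t) A (f j) j.

Definition inD (k l m n : nat) (A : 'M[nat]_(n * k, n * l)) : Prop :=
  (forall i : 'I_(n * k), \sum_(j < n * l) A i j = m * l) /\
  (forall j : 'I_(n * l), \sum_(i < n * k) A i j = m * k).
Arguments inD k l m n A : clear implicits.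
Arguments tdet {s t} A.

From mathcomp Require Import all_boot all_order all_algebra.
From mathcomp Require Import zify ring.
Set Implicit Arguments. Unset Strict Implicit. Unset Printing Implicit Defensive.

(* Pad A with zero rows to a square matrix.  By the Koenig-Egervary theorem,
   obtained from Hall's theorem by the Hungarian descent on integer covers,
   some cover A i j <= u i + v j by nonnegative integers has total at most
   tdet A; so it suffices to bound the total of an arbitrary cover.  Let
   a = min u and b = min v.  If a + b <> q, a row with u = a or a column with
   v = b already forces a total of at least nk(q+1).  If a + b = q, let X and Y
   count the rows and columns where u and v exceed their minima.  Summing A
   over the rows with u = a, and splitting the columns into those with v = b
   (where the entries are at most q) and the Y others (each of column sum mk),
   shows that (max X rk, max Y rl) satisfies the constraint defining x and y,
   whence the total is at least nkq + x + y. *)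

Section Hall.
Variables (I J : finType) (j0 : J).
Implicit Types (G : I -> J -> bool) (R S : {set I}) (C : {set J}).

Definition nbr G S : {set J} := [set j | [exists i in S, G i j]].

Definition avoid G C i j := G i j && (j \notin C).

Definition hall_condition G R := forall S, S \subset R -> #|S| <= #|nbr G S|.

Definition matching G R (f : I -> J) :=
  {in R &, injective f} /\ {in R, forall i, G i (f i)}.

Lemma nbrP G S j : reflect (exists2 i, i \in S & G i j) (j \in nbr G S).
Proof.
rewrite inE; apply: (iffP existsP) => [[i /andP[]] | [i Si Gij]]; first by exists i.
by exists i; rewrite Si.
Qed.

Lemma nbrU G S1 S2 : nbr G (S1 :|: S2) = nbr G S1 :|: nbr G S2.
Proof.
apply/setP => j; apply/nbrP/setUP => [[i /setUP[] Si Gij] | [] /nbrP[i Si Gij]].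
- by left; apply/nbrP; exists i.
- by right; apply/nbrP; exists i.
- by exists i; rewrite // inE Si.
- by exists i; rewrite // inE Si orbT.
Qed.

Lemma nbr_avoid G C S : nbr G S \subset nbr (avoid G C) S :|: C.
Proof.
apply/subsetP => j /nbrP[i Si Gij]; rewrite inE.
case: (boolP (j \in C)) => jC; rewrite ?orbT // orbF.
by apply/nbrP; exists i; rewrite // /avoid Gij jC.
Qed.

Lemma matching_glue G C R S f1 f2 :
  matching G S f1 -> {in S, forall i, f1 i \in C} ->
  matching (avoid G C) (R :\: S) f2 ->
  matching G R (fun i => if i \in S then f1 i else f2 i).
Proof.
move=> [inj1 G1] C1 [inj2 G2].
have RS i : i \in R -> i \notin S -> i \in R :\: S by move=> iR iS; rewrite inE iS.
split=> [i i' iR i'R | i iR].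
  case: (boolP (i \in S)) => iS; case: (boolP (i' \in S)) => i'S.
  - exact: inj1.
  - by move=> e; have /andP[_] := G2 i' (RS _ i'R i'S); rewrite -e C1.
  - by move=> e; have /andP[_] := G2 i (RS _ iR iS); rewrite e C1.
  - by apply: inj2; apply: RS.
case: (boolP (i \in S)) => iS; first exact: G1.
by have /andP[] := G2 i (RS _ iR iS).
Qed.

Section HallStep.
Variables (G : I -> J -> bool) (R : {set I}).
Hypothesis IH : forall G' R', #|R'| < #|R| -> hall_condition G' R' ->
  exists f, matching G' R' f.
Hypothesis hallR : hall_condition G R.

Lemma hall_critical S0 : S0 \proper R -> S0 != set0 -> #|nbr G S0| <= #|S0| ->
  exists f, matching G R f.
Proof.
move=> ltS0R nzS0 critS0; have leS0R := proper_sub ltS0R.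
have [f1 match1] : exists f, matching G S0 f.
  apply: IH; first exact: proper_card.
  by move=> S leSS0; apply: hallR; apply: subset_trans leSS0 leS0R.
have [f2 match2] : exists f, matching (avoid G (nbr G S0)) (R :\: S0) f.
  apply: IH => [|S leSRS0].
    rewrite cardsDS //; have := proper_card ltS0R.
    by move: nzS0; rewrite -card_gt0; lia.
  have leSR : S \subset R by apply: subset_trans leSRS0 (subsetDl _ _).
  have disj : S :&: S0 = set0.
    apply/setP => i; rewrite !inE; apply/andP => -[Si S0i].
    by have := subsetP leSRS0 i Si; rewrite inE S0i.
  have hallU : #|S :|: S0| <= #|nbr G (S :|: S0)|.
    by apply: hallR; rewrite subUset leSR leS0R.
  have cardU := cardsU S S0; rewrite disj cards0 subn0 in cardU.
  have nbrSU : nbr G (S :|: S0) \subset nbr (avoid G (nbr G S0)) S :|: nbr G S0.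
    by rewrite nbrU subUset nbr_avoid subsetUr.
  have := subset_leq_card nbrSU.
  have := (leq_card_setU (nbr (avoid G (nbr G S0)) S) (nbr G S0)).1.
  lia.
exists (fun i => if i \in S0 then f1 i else f2 i).
apply: matching_glue match2 => // i S0i; apply/nbrP; exists i => //.
by case: match1 => _; apply.
Qed.

Lemma hall_free i0 : i0 \in R ->
  (forall S, S \proper R -> S != set0 -> #|S| < #|nbr G S|) ->
  exists f, matching G R f.
Proof.
move=> Ri0 noncrit.
have [j1 Gi0j1] : exists j, G i0 j.
  have := hallR (S := [set i0]); rewrite sub1set Ri0 cards1 card_gt0 => /(_ isT).
  by case/set0Pn => j /nbrP[i]; rewrite inE => /eqP ->; exists j.
have [f2 match2] : exists f, matching (avoid G [set j1]) (R :\ i0) f.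
  apply: IH => [|S leSR].
    by rewrite (cardsD1 i0 R) Ri0.
  have [-> | nzS] := eqVneq S set0; first by rewrite cards0.
  have ltSR : S \proper R.
    rewrite properE (subset_trans leSR (subsetDl _ _)) /=.
    by apply/subsetP => /(_ i0 Ri0) /(subsetP leSR); rewrite !inE eqxx.
  have := subset_leq_card (nbr_avoid G [set j1] S).
  have := (leq_card_setU (nbr (avoid G [set j1]) S) [set j1]).1.
  have := noncrit S ltSR nzS; rewrite cards1; lia.
exists (fun i => if i \in [set i0] then j1 else f2 i).
apply: matching_glue match2 => [|i _]; last by rewrite inE.
by split=> [i i' | i]; rewrite !inE => /eqP ->; [move/eqP -> | ].
Qed.
End HallStep.

Theorem hall G R : hall_condition G R -> exists f, matching G R f.
Proof.
have [n ltRn] := ubnP #|R|; elim: n => // n IHn in G R ltRn *.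
move=> hallR; have [R0 | [i0 Ri0]] := set_0Vmem R.
  by exists (fun _ => j0); split=> i; rewrite R0 inE.
have IH G' R' : #|R'| < #|R| -> hall_condition G' R' -> exists f, matching G' R' f.
  by move=> ltR'R; apply: IHn; apply: leq_trans ltR'R _.
case: (boolP [exists S : {set I}, [&& S \proper R, S != set0 & #|nbr G S| <= #|S|]]).
  by case/existsP => S /and3P[]; apply: hall_critical.
rewrite negb_exists => /forallP noncrit; apply: (hall_free IH hallR Ri0) => S ltSR nzS.
by have := noncrit S; rewrite ltSR nzS ltnNge.
Qed.

End Hall.

Section Egervary.
Import Order.TTheory GRing.Theory Num.Theory.
Variables (T : finType) (t0 : T) (P : T -> T -> nat).
Local Open Scope ring_scope.
Implicit Types (u v : T -> int) (S : {set T}).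

Definition cover u v := forall i j, (P i j)%:Z <= u i + v j.
Definition cover_total u v := \sum_i u i + \sum_j v j.
Definition tight u v i j := u i + v j == (P i j)%:Z.
Definition weight (f : T -> T) := (\sum_i P i (f i))%N.

Lemma Posz_sum (F : T -> nat) : (\sum_i F i)%N%:Z = \sum_i (F i)%:Z.
Proof. by elim/big_rec2: _ => // i a b _ <-; rewrite PoszD. Qed.

Lemma sumz_indicator S : \sum_i ((i \in S) : nat)%:Z = #|S|%:Z.
Proof.
rewrite -Posz_sum -sum1_card; congr Posz; rewrite [RHS]big_mkcond.
by apply: eq_bigr => i _; case: (i \in S).
Qed.

Lemma cover_total_ge0 u v : cover u v -> 0 <= cover_total u v.
Proof.
move=> cov; rewrite /cover_total -big_split sumr_ge0 // => i _.
exact: le_trans (cov i i).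
Qed.

Lemma tight_matching_total u v f : matching (tight u v) setT f ->
  injective f /\ cover_total u v = (weight f)%:Z.
Proof.
case=> finj ftight; have injf : injective f by move=> a b; apply: finj; rewrite inE.
split=> //; rewrite /cover_total [\sum_j v j](reindex_inj injf) -big_split Posz_sum.
by apply: eq_bigr => i _; apply/eqP/ftight; rewrite inE.
Qed.

Lemma cover_shift u v S : cover u v ->
  cover (fun i => u i - (i \in S)%:Z) (fun j => v j + (j \in nbr (tight u v) S)%:Z).
Proof.
move=> cov i j; have := cov i j.
case: (boolP (i \in S)) => iS; case: (boolP (j \in nbr (tight u v) S)) => jN /=;
  try lia.
have /eqP : ~~ tight u v i j by apply: contra jN => tij; apply/nbrP; exists i.
lia.
Qed.

Lemma cover_total_shift u v S :
  cover_total (fun i => u i - (i \in S)%:Z)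
              (fun j => v j + (j \in nbr (tight u v) S)%:Z)
  = cover_total u v - #|S|%:Z + #|nbr (tight u v) S|%:Z.
Proof. by rewrite /cover_total !big_split /= sumrN !sumz_indicator; ring. Qed.

Lemma cover_descent u v : cover u v ->
  (exists f, injective f /\ cover_total u v = (weight f)%:Z) \/
  (exists u' v', cover u' v' /\ cover_total u' v' < cover_total u v).
Proof.
move=> cov; case: (boolP [forall S : {set T}, #|S| <= #|nbr (tight u v) S|]%N).
  move/forallP => hallT; left.
  have [f] := @hall _ _ t0 (tight u v) setT (fun S _ => hallT S).
  by move/tight_matching_total => [injf tot]; exists f.
case/forallPn => S; rewrite -ltnNge => deficient; right.
exists (fun i => u i - (i \in S)%:Z), (fun j => v j + (j \in nbr (tight u v) S)%:Z).
split; first exact: cover_shift.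
by rewrite cover_total_shift; lia.
Qed.

Lemma egervary_from_cover u v : cover u v -> exists f, injective f /\
  exists u' v', cover u' v' /\ cover_total u' v' = (weight f)%:Z.
Proof.
have [n] := ubnP `|cover_total u v|%N; elim: n => // n IHn in u v *.
move=> lt_n cov; case: (cover_descent cov) => [[f [injf tot]] | [u' [v' [cov' lt]]]].
  by exists f; split=> //; exists u, v.
apply: (IHn u' v') => //; move: lt_n lt (cover_total_ge0 cov'); lia.
Qed.

Theorem egervary : exists f, injective f /\
  exists u v, cover u v /\ cover_total u v = (weight f)%:Z.
Proof.
apply: (@egervary_from_cover (fun i => (\sum_j P i j)%N%:Z) (fun=> 0)) => i j.
by rewrite addr0 lez_nat (bigD1 j) //= leq_addr.
Qed.

Corollary egervary_nat : exists f, injective f /\ exists u v : T -> nat,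
  (forall i j, P i j <= u i + v j)%N /\ (\sum_i u i + \sum_j v j)%N = weight f.
Proof.
have [f [injf [u [v [cov tot]]]]] := egervary; exists f; split=> //.
have [j0 _ minv] := @arg_minP _ _ _ t0 predT v isT; set c := v j0 in minv.
have hu i : 0 <= u i + c by have := cov i j0; lia.
have hv j : 0 <= v j - c by have := minv j isT; lia.
exists (fun i => absz (u i + c)), (fun j => absz (v j - c)); split.
  by move=> i j; rewrite -lez_nat PoszD !gez0_abs //; have := cov i j; lia.
apply/eqP; rewrite -eqz_nat PoszD -tot !Posz_sum; apply/eqP.
under eq_bigr do rewrite gez0_abs //; under [X in _ + X]eq_bigr do rewrite gez0_abs //.
by rewrite /cover_total !big_split /= sumrN; ring.
Qed.
End Egervary.

Lemma tdet_ge_weight s t (A : 'M[nat]_(s, t)) (g : 'I_s -> 'I_t) :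
  s <= t -> injective g -> \sum_i A i (g i) <= tdet A.
Proof.
move=> le_st injg; rewrite /tdet le_st.
have injgf : injectiveb [ffun i => g i].
  by apply/injectiveP => a b; rewrite !ffunE; apply: injg.
apply: leq_trans (leq_bigmax_cond _ injgf).
by apply/eq_leq/eq_bigr => i _; rewrite ffunE.
Qed.

Lemma tdet_cover s t (A : 'M[nat]_(s, t)) : s <= t ->
  exists u v, (forall i j, A i j <= u i + v j) /\ \sum_i u i + \sum_j v j <= tdet A.
Proof.
move=> le_st; have [t0 | t_gt0] := posnP t.
  exists (fun=> 0), (fun=> 0); split=> [i j | ]; last by rewrite !big1.
  by have := ltn_ord i; lia.
pose P (i j : 'I_t) := if insub (val i) is Some i' then A i' j else 0.
have [f [injf [u [v [cover_P weight_f]]]]] := egervary_nat (Ordinal t_gt0) P.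
pose w := widen_ord le_st.
have P_w i j : P (w i) j = A i j.
  by rewrite /P (_ : insub (val (w i)) = Some i) //; apply: valK.
have P_high (i j : 'I_t) : ~~ (i < s) -> P i j = 0.
  by move=> hi; rewrite /P insubF //; apply: negbTE.
exists (fun i => u (w i)), v; split=> [i j | ]; first by rewrite -P_w.
have inj_fw : injective (fun i => f (w i)).
  by move=> a b /injf /(congr1 val) /= eq_ab; apply: val_inj.
apply: leq_trans (tdet_ge_weight A le_st inj_fw).
have -> : \sum_i A i (f (w i)) = weight P f.
  rewrite /weight (bigID (fun i : 'I_t => i < s)) /= [X in _ + X]big1 ?addn0.
    by rewrite (big_ord_narrow le_st); apply: eq_bigr => i _; rewrite P_w.
  by move=> i /P_high ->.
rewrite -weight_f leq_add2r -(big_ord_narrow le_st).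
by rewrite [X in _ <= X](bigID (fun i : 'I_t => i < s)) leq_addr.
Qed.

Lemma sum_ord_const N c : \sum_(i < N) c = N * c.
Proof. by rewrite sum_nat_const card_ord. Qed.

Lemma sum_ge_min N (F : 'I_N -> nat) a : (forall i, a <= F i) ->
  N * a + \sum_i (F i != a) <= \sum_i F i.
Proof.
move=> minF; rewrite -sum_ord_const -big_split /=.
by apply: leq_sum => i _; have := minF i; case: eqP => /=; lia.
Qed.

Lemma sum_eq_neq N (F : 'I_N -> nat) a : \sum_i (F i == a) + \sum_i (F i != a) = N.
Proof.
by rewrite -big_split /= -[RHS]card_ord -sum1_card; apply: eq_bigr => i _; case: eqP.
Qed.

Lemma block_constraint k l n q r s t X Y : s + X = n * k -> t + Y = n * l ->
  s * ((q * n + r) * l) <= q * (s * t) + Y * ((q * n + r) * k) ->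
  k * l * n * r <= q * X * Y + r * (X * l + Y * k).
Proof.
move=> esX etY.
rewrite (_ : (q * n + r) * l = q * (t + Y) + r * l); last by rewrite etY; ring.
rewrite (_ : (q * n + r) * k = q * (s + X) + r * k); last by rewrite esX; ring.
rewrite (_ : k * l * n * r = r * l * (s + X)); last by rewrite esX; ring.
rewrite !(mulnDr, mulnDl) !mulnA.
lia.
Qed.

Section CoverBound.
Variables (k l n q r : nat) (A : 'M[nat]_(n * k, n * l)).
Variables (u : 'I_(n * k) -> nat) (v : 'I_(n * l) -> nat).
Hypothesis le_kl : k <= l.
Hypothesis rowsA : forall i, \sum_j A i j = (q * n + r) * l.
Hypothesis colsA : forall j, \sum_i A i j = (q * n + r) * k.
Hypothesis coverA : forall i j, A i j <= u i + v j.

Let le_nk_nl : n * k <= n * l.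
Proof. by rewrite leq_mul2l le_kl orbT. Qed.

Let le_nk_nl_mul c : n * k * c <= n * l * c.
Proof. by rewrite leq_mul2r le_nk_nl orbT. Qed.

Let U := \sum_i u i.
Let V := \sum_j v j.

Lemma row_cover_bound i : (q * n + r) * l <= n * l * u i + V.
Proof.
rewrite -(rowsA i) /V -(sum_ord_const (n * l) (u i)) -big_split.
exact: leq_sum.
Qed.

Lemma col_cover_bound j : (q * n + r) * k <= U + n * k * v j.
Proof.
rewrite -(colsA j) /U -(sum_ord_const (n * k) (v j)) -big_split.
exact: leq_sum.
Qed.

Lemma cover_bound_lt i j : u i + v j < q -> n * k * (q + 1) <= U + V.
Proof.
move=> ltq; have := row_cover_bound i; have := col_cover_bound j.
have : n * l * (u i + v j + 1) <= n * l * q by rewrite leq_mul2l addn1 ltq orbT.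
by have := le_nk_nl; have := le_nk_nl_mul (v j); lia.
Qed.

Lemma cover_bound_gt a b : (forall i, a <= u i) -> (forall j, b <= v j) ->
  q < a + b -> n * k * (q + 1) <= U + V.
Proof.
move=> min_u min_v gtq.
have := leq_trans (leq_addr _ _) (sum_ge_min min_u).
have := leq_trans (leq_addr _ _) (sum_ge_min min_v).
have : n * k * (q + 1) <= n * k * (a + b) by rewrite leq_mul2l addn1 gtq orbT.
by have := le_nk_nl_mul b; rewrite -/U -/V; lia.
Qed.

Section Balanced.
Variables (ia : 'I_(n * k)) (jb : 'I_(n * l)).
Let a := u ia.
Let b := v jb.
Hypothesis min_u : forall i, a <= u i.
Hypothesis min_v : forall j, b <= v j.
Hypothesis balanced : a + b = q.

Let s := \sum_i (u i == a).
Let X := \sum_i (u i != a).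
Let t := \sum_j (v j == b).
Let Y := \sum_j (v j != b).

Lemma balanced_block : s * ((q * n + r) * l) <= q * (s * t) + Y * ((q * n + r) * k).
Proof.
have -> : s * ((q * n + r) * l) = \sum_i (u i == a) * \sum_j A i j.
  by rewrite /s big_distrl; apply: eq_bigr => i _; rewrite rowsA.
have -> : q * (s * t) = \sum_i \sum_j (u i == a) * ((v j == b) * q).
  rewrite mulnC /s /t big_distrlr big_distrl /=; apply: eq_bigr => i _.
  by rewrite big_distrl /=; apply: eq_bigr => j _; ring.
have -> : Y * ((q * n + r) * k) = \sum_i \sum_j (v j != b) * A i j.
  rewrite /Y big_distrl exchange_big /=; apply: eq_bigr => j _.
  by rewrite -(colsA j) big_distrr.
rewrite -big_split /=; apply: leq_sum => i _.
rewrite big_distrr -big_split /=; apply: leq_sum => j _.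
have := coverA i j; rewrite -balanced.
by case: (eqVneq (u i) a) => [->|_]; case: (eqVneq (v j) b) => [->|_] /=; lia.
Qed.

Lemma balanced_constraint : k * l * n * r <= q * X * Y + r * (X * l + Y * k).
Proof. exact: block_constraint (sum_eq_neq _ _) (sum_eq_neq _ _) balanced_block. Qed.

Lemma cover_bound_balanced x y :
  (forall x' y', r * k <= x' -> r * l <= y' ->
     k * l * n * r <= q * x' * y' + r * (x' * l + y' * k) -> x + y <= x' + y') ->
  n * k * q + x + y <= U + V.
Proof.
move=> min_xy.
have : x + y <= maxn X (r * k) + maxn Y (r * l).
  apply: min_xy; rewrite ?leq_maxr // (leq_trans balanced_constraint) //.
  have leX := leq_maxl X (r * k); have leY := leq_maxl Y (r * l).
  by rewrite leq_add ?leq_mul ?leq_add ?leq_mul.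
have := sum_ge_min min_u; have := sum_ge_min min_v.
have := row_cover_bound ia; have := col_cover_bound jb; rewrite -/U -/V -/X -/Y -/a -/b.
rewrite -balanced; have := le_nk_nl_mul b; lia.
Qed.
End Balanced.

Theorem cover_bound x y :
  (forall x' y', r * k <= x' -> r * l <= y' ->
     k * l * n * r <= q * x' * y' + r * (x' * l + y' * k) -> x + y <= x' + y') ->
  minn (n * k * (q + 1)) (n * k * q + x + y) <= U + V.
Proof.
move=> min_xy; have [nk0 | nk_gt0] := posnP (n * k); first by rewrite nk0 !mul0n min0n.
have nl_gt0 : 0 < n * l := leq_trans nk_gt0 le_nk_nl.
have [ia _ min_u] := arg_minnP u (isT : predT (Ordinal nk_gt0)).
have [jb _ min_v] := arg_minnP v (isT : predT (Ordinal nl_gt0)).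
have {}min_u i : u ia <= u i by apply: min_u.
have {}min_v j : v jb <= v j by apply: min_v.
case: (ltngtP (u ia + v jb) q) => [ltq | gtq | eqq].
- exact: leq_trans (geq_minl _ _) (cover_bound_lt ltq).
- exact: leq_trans (geq_minl _ _) (cover_bound_gt min_u min_v gtq).
- exact: leq_trans (geq_minr _ _) (cover_bound_balanced min_u min_v eqq min_xy).
Qed.
End CoverBound.

Theorem theorem2p6 (k l n m q r x y : nat) :
  0 < k -> k <= l -> coprime k l -> 1 <= n ->
  m = q * n + r -> r < n ->
  r * k <= x -> r * l <= y ->
  k * l * n * r <= q * x * y + r * (x * l + y * k) ->
  (forall x' y' : nat, r * k <= x' -> r * l <= y' ->
     k * l * n * r <= q * x' * y' + r * (x' * l + y' * k) ->
     x + y <= x' + y') ->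
  forall A : 'M[nat]_(n * k, n * l), inD k l m n A ->
    minn (n * k * (q + 1)) (n * k * q + x + y) <= tdet A.
Proof.
move=> _ le_kl _ _ -> _ _ _ _ min_xy A [rowsA colsA].
have le_nk_nl : n * k <= n * l by rewrite leq_mul2l le_kl orbT.
have [u [v [coverA le_tdet]]] := tdet_cover A le_nk_nl.
exact: leq_trans (cover_bound le_kl rowsA colsA coverA min_xy) le_tdet.
Qed.
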